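(* Let $n,r,k$ be positive integers with $n\ge 2r$. Then $\gamma_{\times k,t}(K(n,r))=k+r$ if and only if $n\ge r(k+r)$. Moreover, for every $n\ge r(k+r)$, every $k$-tuple total dominating set of $K(n,r)$ of cardinality $\gamma_{\times k,t}(K(n,r))$ is a clique (i.e., consists of pairwise disjoint $r$-sets).
   Context: For integers $n\ge 2r$, the Kneser graph $K(n,r)$ has as vertices the $r$-element subsets of $[n]=\{1,\dots,n\}$, two vertices being adjacent iff they are disjoint. For a graph $G$ and positive integer $k$, a set $D\subseteq V(G)$ is a $k$-tuple total dominating set if $|N_G(u)\cap D|\ge k$ for every $u\in V(G)$ ($N_G(u)$ the open neighborhood); $\gamma_{\times k,t}(G)$ is the minimum cardinality of such a set (defined when the minimum degree of $G$ is at least $k$). *)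

From mathcomp Require Import all_boot.
Set Implicit Arguments. Unset Strict Implicit. Unset Printing Implicit Defensive.

Definition open_nbhd (T : finType) (adj : rel T) (u : T) : {set T} :=
  [set v | adj u v].

Definition ktuple_tds (T : finType) (adj : rel T) (k : nat) (D : {set T}) : Prop :=
  forall u : T, k <= #|open_nbhd adj u :&: D|.

(* Convention: if no such set exists (the parameter is undefined), the value
   is 0; this never equals a positive number such as k + r. *)
Definition gamma_ktuple_total (T : finType) (adj : rel T) (k : nat) : nat :=
  if [pick D : {set T} | [forall u, k <= #|open_nbhd adj u :&: D|]] is Some D0
  then #|[arg min_(D < D0 | [forall u, k <= #|open_nbhd adj u :&: D|]) #|D|]|
  else 0.

Definition kneser_vertex (n r : nat) := {A : {set 'I_n} | #|A| == r}.

Definition kneser_adj (n r : nat) : rel (kneser_vertex n r) :=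
  fun A B => [disjoint val A & val B].

Definition is_clique (T : finType) (adj : rel T) (D : {set T}) : Prop :=
  forall u v, u \in D -> v \in D -> u != v -> adj u v.

From mathcomp Require Import all_boot zify.
Set Implicit Arguments. Unset Strict Implicit. Unset Printing Implicit Defensive.

(* A vertex u of K(n,r) is adjacent to no member of D that it meets.  Hence if
   some S ⊆ D is pierced by at most r points, extending these points to an
   r-set u shows |D| >= k + |S|.  Any r members of D are pierced by r points,
   so |D| >= k + r; if two members of D intersect, then they and r - 1 further
   members are pierced by r points, so |D| >= k + r + 1.  Thus a k-tuple total
   dominating set of size k + r is a family of k + r pairwise disjoint r-sets,
   which needs r(k + r) <= n.  Conversely such a family dominates, because an
   r-set meets at most r of its members. *)

Section CardSubsets.
Variable T : finType.

Lemma exists_subset_card (A : {set T}) m :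
  m <= #|A| -> exists2 S : {set T}, S \subset A & #|S| = m.
Proof.
rewrite -bin_gt0 -cards_draws => /card_gt0P[S].
by rewrite inE => /andP[sSA /eqP cS]; exists S.
Qed.

Lemma exists_superset_card (H : {set T}) m :
  #|H| <= m <= #|T| -> exists2 U : {set T}, H \subset U & #|U| = m.
Proof.
move=> /andP[Hm mT].
have [C sCH cC] : exists2 C : {set T}, C \subset ~: H & #|C| = #|T| - m.
  by apply: exists_subset_card; have := cardsC H; lia.
by exists (~: C); [rewrite subsetC | have := cardsC C; lia].
Qed.

Lemma trivIset_card_meet (P : {set {set T}}) (U : {set T}) :
  trivIset P -> #|[set A in P | ~~ [disjoint A & U]]| <= #|U|.
Proof.
move=> tP; apply: leq_trans (leq_imset_card (pblock P) U).
apply/subset_leq_card/subsetP => A; rewrite inE => /andP[AP /pred0Pn[x /andP[xA xU]]].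
by apply/imsetP; exists x; rewrite // (def_pblock tP AP xA).
Qed.

End CardSubsets.

Section GammaKTupleTotal.
Variables (T : finType) (adj : rel T) (k : nat).

Lemma gamma_ktuple_total_eq m :
  (exists2 D, ktuple_tds adj k D & #|D| = m) ->
  (forall D, ktuple_tds adj k D -> m <= #|D|) ->
  gamma_ktuple_total adj k = m.
Proof.
move=> [D1 tD1 cD1] minm; rewrite /gamma_ktuple_total.
case: pickP => [D0 tD0 | none]; last by have := none D1; rewrite (introT forallP tD1).
case: arg_minnP => // D /forallP tD minD.
by apply/eqP; rewrite eqn_leq minm // -cD1 minD //; apply/forallP.
Qed.

Lemma gamma_ktuple_total_gt0 :
  0 < gamma_ktuple_total adj k ->
  exists2 D, ktuple_tds adj k D & #|D| = gamma_ktuple_total adj k.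
Proof.
rewrite /gamma_ktuple_total; case: pickP => // D0 tD0 _.
by case: arg_minnP => // D /forallP tD _; exists D.
Qed.

End GammaKTupleTotal.

Section KneserGraph.
Variables n r : nat.
Hypothesis r_gt0 : 0 < r.

Local Notation V := (kneser_vertex n r).
Local Notation adj := (@kneser_adj n r).

Lemma card_kneser_vertex (B : V) : #|val B| = r.
Proof. exact/eqP/(valP B). Qed.

Lemma exists_transversal (S : {set V}) :
  exists2 H : {set 'I_n}, #|H| <= #|S| &
    forall B, B \in S -> ~~ [disjoint val B & H].
Proof.
have inhB (B : V) : exists x, x \in val B.
  by apply/card_gt0P; rewrite card_kneser_vertex.
exists ((fun B => xchoose (inhB B)) @: S) => [|B BS]; first exact: leq_imset_card.
by apply/pred0Pn; exists (xchoose (inhB B)); rewrite /= imset_f // andbT; apply: xchooseP.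
Qed.

Lemma ktuple_tds_card_transversal k (D S : {set V}) (H : {set 'I_n}) :
  r <= n -> ktuple_tds adj k D -> S \subset D -> #|H| <= r ->
  (forall B, B \in S -> ~~ [disjoint val B & H]) -> k + #|S| <= #|D|.
Proof.
move=> le_rn tdsD sSD cH hitS.
have [U sHU /eqP cU] : exists2 U : {set 'I_n}, H \subset U & #|U| = r.
  by apply: exists_superset_card; rewrite cH card_ord le_rn.
pose u : V := Sub U cU.
have nbhd_sub : open_nbhd adj u :&: D \subset D :\: S.
  apply/subsetP => B; rewrite !inE => /andP[uB ->]; rewrite andbT.
  apply: contraL uB => /hitS; apply: contra => disj_uB.
  by rewrite disjoint_sym (disjointWl sHU).
have := leq_trans (tdsD u) (subset_leq_card nbhd_sub).
by rewrite cardsD (setIidPr sSD) addnC -leq_subRL // subset_leq_card.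
Qed.

Section KTupleTDS.
Variable k : nat.
Hypotheses (k_gt0 : 0 < k) (r_le_n : r <= n).

Lemma ktuple_tds_card_ge (D : {set V}) : ktuple_tds adj k D -> k + r <= #|D|.
Proof.
move=> tdsD.
have [S sSD cS] := exists_subset_card (geq_minr r #|D|).
have [H cH hitS] := exists_transversal S.
have := ktuple_tds_card_transversal r_le_n tdsD sSD _ hitS.
by rewrite cS in cH *; lia.
Qed.

Lemma ktuple_tds_small_clique (D : {set V}) :
  ktuple_tds adj k D -> #|D| <= k + r -> is_clique adj D.
Proof.
move=> tdsD cD B1 B2 B1D B2D B12; apply: contraT => /pred0Pn[x /andP[/= xB1 xB2]].
have [S' sS' cS'] : exists2 S' : {set V}, S' \subset D :\: [set B1; B2] & #|S'| = r.-1.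
  apply: exists_subset_card.
  rewrite cardsD (setIidPr _) ?cards2 ?B12; last by rewrite subUset !sub1set B1D.
  by have := ktuple_tds_card_ge tdsD; lia.
move: sS'; rewrite subsetD disjoint_sym => /andP[sS'D disjS'].
have [H cH hitS'] := exists_transversal S'.
have hit B : B \in [set B1; B2] :|: S' -> ~~ [disjoint val B & x |: H].
  rewrite in_setU in_set2 => /orP[/orP[]/eqP-> | /hitS'].
  - by apply/pred0Pn; exists x; rewrite /= xB1 setU11.
  - by apply/pred0Pn; exists x; rewrite /= xB2 setU11.
  - by apply: contra; apply: disjointWr (subsetU1 x H).
have cS : #|[set B1; B2] :|: S'| = r.+1.
  by rewrite cardsU (disjoint_setI0 disjS') cards0 cards2 B12 cS'; lia.
have cxH : #|x |: H| <= r by rewrite cardsU1; have := leq_b1 (x \notin H); lia.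
have sSD : [set B1; B2] :|: S' \subset D by rewrite !subUset !sub1set B1D B2D sS'D.
by have := ktuple_tds_card_transversal r_le_n tdsD sSD cxH hit; rewrite cS; lia.
Qed.

End KTupleTDS.

Lemma trivIset_clique (D : {set V}) : is_clique adj D -> trivIset (val @: D).
Proof.
move=> clD; apply/trivIsetP => _ _ /imsetP[B BD ->] /imsetP[C CD ->] neBC.
by apply: clD => //; apply: contraNneq neBC => ->.
Qed.

Lemma card_cover_clique (D : {set V}) :
  is_clique adj D -> #|cover (val @: D)| = #|D| * r.
Proof.
move=> /trivIset_clique/eqP <-; rewrite big_imset /=; last exact: in2W val_inj.
by rewrite (eq_bigr (fun=> r)) ?sum_nat_const // => B _; apply: card_kneser_vertex.
Qed.

Lemma clique_card_mul (D : {set V}) : is_clique adj D -> #|D| * r <= n.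
Proof.
by move/card_cover_clique <-; have := max_card (cover (val @: D)); rewrite card_ord.
Qed.

Lemma clique_ktuple_tds (D : {set V}) :
  is_clique adj D -> ktuple_tds adj (#|D| - r) D.
Proof.
move=> clD u; pose S := [set B : V | ~~ [disjoint val B & val u]].
have cDS : #|D :&: S| <= r.
  rewrite -(card_imset _ val_inj) -[X in _ <= X](card_kneser_vertex u).
  apply: leq_trans (trivIset_card_meet (val u) (trivIset_clique clD)).
  apply/subset_leq_card/subsetP => A /imsetP[B]; rewrite !inE => /andP[BD hit] ->.
  by rewrite imset_f.
have -> : open_nbhd adj u :&: D = D :\: S.
  by apply/setP => B; rewrite !inE negbK disjoint_sym andbC.
by rewrite leq_subLR -[X in X <= _](cardsID S D) leq_add2r.
Qed.

Lemma exists_clique m :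
  m * r <= n -> exists2 D : {set V}, is_clique adj D & #|D| = m.
Proof.
elim: m => [_ | m IHm hm]; first by exists set0 => [? ?|]; rewrite ?inE ?cards0.
have [D clD cD] : exists2 D : {set V}, is_clique adj D & #|D| = m.
  by apply: IHm; apply: leq_trans hm; rewrite leq_mul2r leqnSn orbT.
have [U sU /eqP cU] : exists2 U : {set 'I_n}, U \subset ~: cover (val @: D) & #|U| = r.
  apply: exists_subset_card.
  by rewrite cardsCs setCK card_ord card_cover_clique // cD; rewrite mulSn in hm; lia.
pose u : V := Sub U cU.
have disj_u B : B \in D -> adj u B.
  move=> BD; rewrite /kneser_adj disjoints_subset (subset_trans sU) // setCS.
  by apply: (bigcup_sup (val B)); apply: imset_f.
have uD : u \notin D.
  apply/negP => /disj_u /=.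
  have /card_gt0P[x xU] : 0 < #|U| by rewrite (eqP cU).
  by move/disjointFr/(_ xU); rewrite xU.
exists (u |: D); last by rewrite cardsU1 uD cD.
move=> B C; rewrite !inE => /orP[/eqP->|BD] /orP[/eqP->|CD] neBC.
- by rewrite eqxx in neBC.
- exact: disj_u.
- by rewrite /kneser_adj disjoint_sym; apply: disj_u.
- exact: clD.
Qed.

End KneserGraph.

Theorem theorem3p2 (n r k : nat) :
  0 < n -> 0 < r -> 0 < k -> 2 * r <= n ->
  (gamma_ktuple_total (@kneser_adj n r) k = k + r <-> r * (k + r) <= n) /\
  (r * (k + r) <= n ->
     forall D : {set kneser_vertex n r},
       ktuple_tds (@kneser_adj n r) k D ->
       #|D| = gamma_ktuple_total (@kneser_adj n r) k ->
       is_clique (@kneser_adj n r) D).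
Proof.
move=> _ r_gt0 k_gt0 le2rn; have le_rn : r <= n by lia.
have gamma_eq : r * (k + r) <= n -> gamma_ktuple_total (@kneser_adj n r) k = k + r.
  rewrite mulnC => /(exists_clique r_gt0)[D clD cD].
  apply: gamma_ktuple_total_eq => [|D' tD']; last exact: ktuple_tds_card_ge tD'.
  by exists D; rewrite // -[k](addnK r) -cD; apply: clique_ktuple_tds.
split; [split=> // gamma_kr | move=> le_n D tD cD].
- have [D tD cD] : exists2 D, ktuple_tds (@kneser_adj n r) k D & #|D| = k + r.
    by rewrite -gamma_kr; apply: gamma_ktuple_total_gt0; rewrite gamma_kr; lia.
  rewrite mulnC -cD; apply: clique_card_mul.
  by apply: (ktuple_tds_small_clique r_gt0 k_gt0 le_rn tD); rewrite cD.
- by apply: (ktuple_tds_small_clique r_gt0 k_gt0 le_rn tD); rewrite cD gamma_eq.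
Qed.
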